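(* Let $V$ be the crossed module with group part $\langle a\mid a^4=1\rangle\cong C_4$, module part $\langle b\mid b^4=1\rangle\cong C_4$, structure morphism $\mu(b)=a^2$ and action ${}^ab=b^{-1}$. Then for $n\in\mathbb N_0$ (with $\mathbb Z/n$ a trivial module, $\mathbb Z/0=\mathbb Z$), \[H^2(V,\mathbb Z/n)\cong\begin{cases}\mathbb Z/2 & n\text{ even},\\ 0 & n\text{ odd}.\end{cases}\]
   Context: A crossed module $V=(G_V,M_V,\mu)$: left action ${}^gm$ of $G_V$ on $M_V$, $\mu({}^gm)=g\mu(m)g^{-1}$, ${}^{\mu(n)}m=nmn^{-1}$. With $\bar g$ the class of $g$ in $\pi_0(V)=G_V/\mu(M_V)$ and $M$ an abelian $\pi_0(V)$-module, $H^2(V,M)$ is the second cohomology of $C^1(V,M)=\mathrm{Map}(G_V,M)\to C^2(V,M)=\mathrm{Map}(M_V\times G_V\times G_V,M)\to C^3(V,M)=\mathrm{Map}(M_V\times M_V\times G_V\times M_V\times G_V\times G_V,M)$, $(dc)(m,h,g)=c(\mu(m)h)-c(hg)+\bar hc(g)$, $(dc)(p,n,k,m,h,g)=c(p,\mu(n)k,\mu(m)h)-c(pn,k,hg)+c(n\,{}^km,kh,g)-\bar kc(m,h,g)$ (equivalently, the cohomology of the associated coskeleton simplicial group). *)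

From HB Require Import structures.
From mathcomp Require Import all_boot all_order all_algebra.
Set Implicit Arguments. Unset Strict Implicit. Unset Printing Implicit Defensive.
Import Order.TTheory GRing.Theory Num.Theory.
Local Open Scope ring_scope.

(* The crossed module V: both groups are C_4, written additively as 'Z_4
   (a^i <-> i : G, b^j <-> j : M). *)
Definition GV := 'Z_4.
Definition MV := 'Z_4.
Definition muV (m : MV) : GV := m *+ 2.
Definition actV (g : GV) (m : MV) : MV := if odd (val g) then - m else m.

(* Cochains with values in Z/n (trivial module), represented by integer
   valued maps; two cochains are equal in C^k(V,Z/n) iff they agree mod n
   pointwise (for n = 0 this is equality in Z). *)
Definition C1 := GV -> int.
Definition C2 := MV -> GV -> GV -> int.
Definition C3 := MV -> MV -> GV -> MV -> GV -> GV -> int.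

(* differentials, trivial action of pi_0(V) on the coefficients;
   group laws written additively: mu(m)h ~ muV m + h, hg ~ h + g,
   pn ~ p + n, n ^k m ~ n + actV k m *)
Definition d1 (c : C1) : C2 :=
  fun m h g => c (muV m + h) - c (h + g) + c g.
Definition d2 (c : C2) : C3 :=
  fun p n k m h g =>
    c p (muV n + k) (muV m + h) - c (p + n) k (h + g)
    + c (n + actV k m) (k + h) g - c m h g.

Definition cong (n : nat) (x y : int) : Prop := (n%:Z %| (x - y))%Z.

Definition cocycle2 (n : nat) (c : C2) : Prop :=
  forall p n' k m h g, cong n (d2 c p n' k m h g) 0.
Definition coboundary2 (n : nat) (c : C2) : Prop :=
  exists c1 : C1, forall m h g, cong n (c m h g) (d1 c1 m h g).

Definition addC2 (c c' : C2) : C2 := fun m h g => c m h g + c' m h g.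

From mathcomp Require Import all_boot all_order all_algebra ring.
Set Implicit Arguments. Unset Strict Implicit. Unset Printing Implicit Defensive.
Import GRing.Theory.
Local Open Scope ring_scope.

(* Since V is finite, a 2-cochain is a vector of 64 integers and the cocycle
   conditions are integer linear forms in it. Integer linear algebra shows that
   every cochain c differs from d1 b_c + psi(c) u by an integer combination of
   these forms, where b_c is a 1-cochain depending linearly on c,
   u(m, h, g) = [h and g odd] is an integral cocycle, and
   psi(c) = c(0,1,1) - 2 c(0,1,2) + 3 c(1,0,0). So every cocycle mod n is
   cohomologous to psi(c) u. As psi(u) = 1 and psi(d1 b) = 2 b(3), for n even
   psi mod 2 induces H^2(V, Z/n) ~ Z/2; and as 2u = d1 w with w(g) = [g odd],
   for n odd every cocycle is a coboundary. *)

Section LinearCombinations.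

Variable T : eqType.

Definition lincomb := seq (int * T).

Definition lc_eval (f : T -> int) (L : lincomb) : int :=
  foldr (fun x acc => x.1 * f x.2 + acc) 0 L.

Definition lc_coef (L : lincomb) (t : T) : int :=
  foldr (fun x acc => if x.2 == t then x.1 + acc else acc) 0 L.

Definition lc_scale (k : int) (L : lincomb) : lincomb :=
  [seq (k * x.1, x.2) | x <- L].

Lemma lc_eval_cat f L1 L2 : lc_eval f (L1 ++ L2) = lc_eval f L1 + lc_eval f L2.
Proof. by elim: L1 => [|x L IH] /=; rewrite ?add0r // IH addrA. Qed.

Lemma lc_eval_scale f k L : lc_eval f (lc_scale k L) = k * lc_eval f L.
Proof. by elim: L => [|x L IH] /=; rewrite ?mulr0 // IH mulrDr mulrA. Qed.

Lemma lc_evalD f g L :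
  lc_eval (fun t => f t + g t) L = lc_eval f L + lc_eval g L.
Proof. by elim: L => [|x L IH] /=; rewrite ?addr0 // IH mulrDr addrACA. Qed.

Lemma lc_evalB f g L :
  lc_eval (fun t => f t - g t) L = lc_eval f L - lc_eval g L.
Proof. by elim: L => [|x L IH] /=; rewrite ?subr0 // IH mulrBr opprD addrACA. Qed.

Lemma lc_eval_dvdz d f L :
  (forall t, (d %| f t)%Z) -> (d %| lc_eval f L)%Z.
Proof. by move=> dvd_f; elim: L => [|x L IH] //=; rewrite rpredD ?dvdz_mull. Qed.

End LinearCombinations.

Section FiniteLinearCombinations.

Variable T : finType.

Lemma lc_eval_coef f (L : lincomb T) : lc_eval f L = \sum_t lc_coef L t * f t.
Proof.
elim: L => [|x L IH] /=; first by rewrite big1 // => t _; rewrite mul0r.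
rewrite IH [RHS](bigD1 x.2) //= eqxx [in LHS](bigD1 x.2) //= mulrDl -addrA.
by congr (_ + (_ + _)); apply: eq_bigr => t; rewrite eq_sym => /negbTE ->.
Qed.

Lemma eq_lc_eval f (L L' : lincomb T) :
  (forall t, lc_coef L t = lc_coef L' t) -> lc_eval f L = lc_eval f L'.
Proof. by move=> eqLL'; rewrite !lc_eval_coef; apply: eq_bigr => t _; rewrite eqLL'. Qed.

End FiniteLinearCombinations.

Definition cell := (MV * GV * GV)%type.

Definition at_cell (c : C2) (t : cell) : int := c t.1.1 t.1.2 t.2.

Definition z4 (k : int) : 'Z_4 := k%:~R.

Definition Z4_elems : seq 'Z_4 := [:: z4 0; z4 1; z4 2; z4 3].

Lemma mem_Z4_elems (x : 'Z_4) : x \in Z4_elems.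
Proof. by case: x => [[|[|[|[|k]]]] lt_k]. Qed.

Definition cells : seq cell :=
  [seq (mh, g) | mh <- [seq (m, h) | m <- Z4_elems, h <- Z4_elems], g <- Z4_elems].

Lemma all_cells (P : pred cell) : all P cells -> forall t, P t.
Proof.
move/allP=> allP [[m h] g]; apply: allP.
by apply: (allpairs_f (fun mh g => (mh, g))); [apply: allpairs_f|]; rewrite mem_Z4_elems.
Qed.

Definition d2_lc (p n k m h g : 'Z_4) : lincomb cell :=
  [:: (1, (p, muV n + k, muV m + h)); (-1, (p + n, k, h + g));
      (1, (n + actV k m, k + h, g)); (-1, (m, h, g))].

Lemma lc_eval_d2 c p n k m h g :
  lc_eval (at_cell c) (d2_lc p n k m h g) = d2 c p n k m h g.
Proof. by rewrite /d2 /at_cell /=; ring. Qed.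

(* The entry [:: a; p; n; k; m; h; g] stands for a times the cocycle condition
   at (p, n, k, m, h, g). *)
Definition relation_lc (r : seq int) : lincomb cell :=
  if r is [:: a; p; n; k; m; h; g]
  then lc_scale a (d2_lc (z4 p) (z4 n) (z4 k) (z4 m) (z4 h) (z4 g))
  else [::].

Lemma relation_lc_dvdz n c r :
  cocycle2 n c -> (n%:Z %| lc_eval (at_cell c) (relation_lc r))%Z.
Proof.
move=> c_cocycle.
case: r => [|a [|p [|n' [|k [|m [|h [|g [|? ?]]]]]]]]; rewrite /relation_lc ?dvdz0 //.
rewrite lc_eval_scale lc_eval_d2 dvdz_mull //.
by have := c_cocycle (z4 p) (z4 n') (z4 k) (z4 m) (z4 h) (z4 g); rewrite /cong subr0.
Qed.

Definition relations_lc (R : seq (seq int)) : lincomb cell :=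
  flatten (map relation_lc R).

Lemma relations_lc_dvdz n c R :
  cocycle2 n c -> (n%:Z %| lc_eval (at_cell c) (relations_lc R))%Z.
Proof.
move=> c_cocycle; elim: R => [|r R IH] //.
by rewrite /relations_lc /= lc_eval_cat rpredD ?relation_lc_dvdz.
Qed.

Definition d1_lc (T : eqType) (B : GV -> lincomb T) (t : cell) : lincomb T :=
  B (muV t.1.1 + t.1.2) ++ lc_scale (-1) (B (t.1.2 + t.2)) ++ B t.2.

Lemma lc_eval_d1_lc (T : eqType) f (B : GV -> lincomb T) t :
  lc_eval f (d1_lc B t) = d1 (fun x => lc_eval f (B x)) t.1.1 t.1.2 t.2.
Proof. by rewrite /d1_lc !lc_eval_cat lc_eval_scale mulN1r addrA. Qed.

Definition d1_transpose (L : lincomb cell) : lincomb GV :=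
  flatten [seq lc_scale x.1 (d1_lc (fun g => [:: (1, g)]) x.2) | x <- L].

Lemma lc_eval_d1_transpose b L :
  lc_eval (at_cell (d1 b)) L = lc_eval b (d1_transpose L).
Proof.
elim: L => [|[a [[m h] g]] L IH] //=.
by rewrite -IH /at_cell /d1 /=; ring.
Qed.

Definition psi_lc : lincomb cell :=
  [:: (1, (z4 0, z4 1, z4 1)); (-2, (z4 0, z4 1, z4 2)); (3, (z4 1, z4 0, z4 0))].

Definition psi (c : C2) : int := lc_eval (at_cell c) psi_lc.

Definition odd_pair : C2 := fun _ h g => if odd h && odd g then 1 else 0.

Definition odd_indicator : C1 := fun g => if odd g then 1 else 0.

Definition primitive_lc (x : GV) : lincomb cell :=
  match val x with
  | 0%N => [:: (1, (z4 0, z4 0, z4 0))]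
  | 1%N => [:: (1, (z4 0, z4 1, z4 2)); (-1, (z4 1, z4 0, z4 0))]
  | 2%N => [:: (1, (z4 1, z4 0, z4 0))]
  | _ => [::]
  end.

Definition primitive (c : C2) : C1 := fun x => lc_eval (at_cell c) (primitive_lc x).

(* Entry 16 m + 4 h + g lists the cocycle relations expressing the cell
   (m, h, g) in terms of d1 (primitive c) and psi; it was found by integer
   linear algebra and is checked by [decomposition_lc_coef] below. *)
Definition certificate_table : seq (seq (seq int)) := [::
  [::];
  [:: [:: -1; 0; 0; 0; 0; 0; 1]];
  [:: [:: -1; 0; 0; 0; 0; 0; 2]];
  [:: [:: -1; 0; 0; 0; 0; 0; 3]];
  [:: [:: 1; 0; 0; 1; 0; 0; 0]];
  [::];
  [::];
  [:: [:: 1; 0; 0; 0; 0; 0; 1]; [:: -1; 0; 0; 0; 0; 0; 3]; [:: -1; 0; 0; 1; 0; 0; 0];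
      [:: -1; 0; 0; 1; 0; 1; 0]; [:: -1; 0; 0; 1; 0; 2; 0]; [:: 1; 0; 1; 0; 0; 2; 2];
      [:: 1; 0; 1; 2; 0; 1; 1]; [:: 1; 0; 1; 3; 1; 0; 0]; [:: -1; 1; 0; 3; 0; 1; 3]];
  [:: [:: 1; 0; 0; 1; 0; 0; 0]; [:: 1; 0; 0; 1; 0; 1; 0]];
  [:: [:: 1; 0; 0; 1; 0; 1; 1]];
  [:: [:: -1; 0; 0; 0; 0; 0; 1]; [:: -1; 0; 0; 0; 0; 0; 2]; [:: -3; 0; 0; 1; 0; 0; 0];
      [:: -2; 0; 0; 1; 0; 1; 0]; [:: -1; 0; 0; 1; 0; 1; 1]; [:: -1; 0; 0; 1; 1; 0; 0];
      [:: 2; 0; 1; 0; 0; 2; 2]; [:: 2; 0; 1; 0; 1; 2; 2]; [:: -1; 0; 1; 2; 1; 0; 2];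
      [:: -1; 0; 1; 3; 0; 1; 2]; [:: 1; 0; 2; 2; 1; 3; 3]; [:: 1; 1; 0; 0; 0; 0; 3];
      [:: 1; 1; 0; 1; 0; 0; 1]; [:: -1; 1; 0; 1; 0; 0; 2]; [:: -1; 1; 0; 1; 1; 0; 3];
      [:: -1; 1; 0; 1; 3; 1; 0]; [:: 1; 1; 0; 2; 0; 0; 2]];
  [:: [:: -1; 0; 0; 0; 0; 0; 1]; [:: -1; 0; 0; 0; 0; 0; 2]; [:: -1; 0; 0; 0; 0; 0; 3];
      [:: -3; 0; 0; 1; 0; 0; 0]; [:: -2; 0; 0; 1; 0; 1; 0]; [:: -1; 0; 0; 1; 0; 1; 1];
      [:: -1; 0; 0; 1; 1; 0; 0]; [:: 1; 0; 1; 0; 0; 2; 2]; [:: 2; 0; 1; 0; 1; 2; 2];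
      [:: -1; 0; 1; 2; 1; 0; 2]; [:: -1; 0; 1; 3; 0; 1; 2]; [:: 1; 0; 2; 2; 1; 3; 3];
      [:: 1; 1; 0; 1; 0; 0; 1]; [:: -1; 1; 0; 1; 3; 1; 0]; [:: 1; 1; 0; 1; 3; 1; 3];
      [:: 1; 1; 0; 2; 0; 0; 3]];
  [:: [:: 1; 0; 0; 1; 0; 0; 0]; [:: 1; 0; 0; 1; 0; 1; 0]; [:: 1; 0; 0; 1; 0; 2; 0]];
  [:: [:: 1; 0; 0; 0; 0; 0; 3]; [:: -1; 0; 0; 1; 0; 1; 0]; [:: -1; 0; 0; 1; 0; 2; 0];
      [:: 1; 0; 0; 1; 1; 0; 0]; [:: 1; 0; 1; 0; 0; 2; 2]; [:: 1; 0; 1; 2; 3; 1; 0];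
      [:: 1; 1; 0; 2; 0; 1; 1]];
  [:: [:: -1; 0; 0; 0; 0; 0; 2]; [:: 1; 0; 0; 0; 0; 0; 3]; [:: -1; 0; 0; 1; 0; 1; 0];
      [:: -1; 0; 0; 1; 0; 2; 0]; [:: 1; 0; 0; 1; 1; 0; 0]; [:: 1; 0; 1; 2; 3; 1; 0];
      [:: -1; 1; 0; 0; 0; 0; 3]; [:: 1; 1; 0; 1; 0; 0; 2]; [:: 1; 1; 0; 1; 1; 0; 3];
      [:: 1; 1; 0; 1; 3; 1; 3]; [:: 1; 1; 0; 2; 0; 1; 2]];
  [:: [:: -1; 0; 0; 0; 0; 0; 2]; [:: -1; 0; 0; 0; 0; 0; 3]; [:: -2; 0; 0; 1; 0; 0; 0];
      [:: -2; 0; 0; 1; 0; 1; 0]; [:: -1; 0; 0; 1; 0; 2; 0]; [:: 1; 0; 1; 0; 1; 2; 2];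
      [:: -1; 0; 1; 2; 1; 0; 2]; [:: -1; 0; 1; 3; 0; 1; 2]; [:: 1; 0; 1; 3; 1; 0; 0];
      [:: 1; 1; 0; 3; 0; 0; 3]];
  [::];
  [:: [:: -1; 1; 0; 0; 0; 0; 1]];
  [:: [:: -1; 0; 0; 0; 0; 0; 2]; [:: -1; 0; 0; 1; 0; 0; 0]; [:: -1; 0; 0; 1; 0; 1; 0];
      [:: 1; 0; 1; 0; 1; 2; 2]; [:: -1; 0; 1; 2; 1; 0; 2]];
  [:: [:: -1; 1; 0; 0; 0; 0; 3]];
  [:: [:: -1; 0; 0; 0; 0; 0; 1]; [:: -1; 0; 0; 0; 0; 0; 2]; [:: -1; 0; 0; 1; 0; 0; 0];
      [:: -1; 0; 0; 1; 0; 1; 0]; [:: 1; 0; 0; 1; 0; 1; 1]; [:: 1; 0; 1; 0; 1; 2; 2];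
      [:: -1; 0; 1; 2; 1; 0; 2]; [:: -1; 0; 1; 3; 0; 1; 2]; [:: 1; 0; 1; 3; 0; 2; 1];
      [:: 1; 1; 0; 1; 0; 0; 1]];
  [:: [:: -1; 0; 0; 0; 0; 0; 2]; [:: -1; 0; 0; 1; 0; 0; 0]; [:: -1; 0; 0; 1; 0; 1; 0];
      [:: 1; 0; 0; 1; 0; 1; 1]; [:: 1; 0; 1; 0; 1; 2; 2]; [:: -1; 0; 1; 2; 1; 0; 2];
      [:: -1; 0; 1; 3; 0; 1; 2]; [:: 1; 0; 1; 3; 0; 2; 1]];
  [:: [:: -1; 0; 0; 0; 0; 0; 1]; [:: -1; 0; 0; 1; 0; 0; 0]; [:: -1; 0; 0; 1; 0; 1; 0];
      [:: 1; 0; 0; 1; 0; 1; 1]; [:: 1; 0; 1; 0; 1; 2; 2]; [:: -1; 0; 1; 2; 1; 0; 2];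
      [:: -1; 0; 1; 3; 0; 1; 2]; [:: 1; 0; 1; 3; 0; 2; 1]; [:: 1; 1; 0; 1; 0; 0; 1];
      [:: -1; 1; 0; 1; 0; 0; 2]];
  [:: [:: -1; 0; 0; 0; 0; 0; 1]; [:: -1; 0; 0; 0; 0; 0; 2]; [:: -3; 0; 0; 1; 0; 0; 0];
      [:: -3; 0; 0; 1; 0; 1; 0]; [:: 1; 0; 1; 0; 0; 2; 2]; [:: 3; 0; 1; 0; 1; 2; 2];
      [:: -2; 0; 1; 2; 1; 0; 2]; [:: -2; 0; 1; 3; 0; 1; 2]; [:: 1; 0; 1; 3; 0; 2; 1];
      [:: 1; 0; 2; 2; 1; 3; 3]; [:: 1; 1; 0; 0; 0; 0; 3]; [:: 1; 1; 0; 1; 0; 0; 1];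
      [:: -1; 1; 0; 1; 0; 0; 2]; [:: -1; 1; 0; 1; 1; 0; 3]];
  [:: [:: 1; 0; 0; 0; 0; 0; 1]; [:: 3; 0; 0; 1; 0; 0; 0]; [:: 2; 0; 0; 1; 0; 1; 0];
      [:: 1; 0; 0; 1; 0; 1; 1]; [:: 1; 0; 0; 1; 1; 0; 0]; [:: -1; 0; 1; 0; 0; 2; 2];
      [:: -2; 0; 1; 0; 1; 2; 2]; [:: 1; 0; 1; 2; 1; 0; 2]; [:: 1; 0; 1; 3; 0; 1; 2];
      [:: -1; 0; 2; 2; 1; 3; 3]; [:: -1; 1; 0; 0; 0; 0; 3]; [:: -1; 1; 0; 1; 0; 0; 1];
      [:: 1; 1; 0; 1; 0; 0; 2]; [:: 1; 1; 0; 1; 1; 0; 3]; [:: 1; 1; 0; 1; 3; 1; 0]];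
  [:: [:: -1; 0; 0; 0; 0; 0; 3]; [:: 1; 0; 0; 1; 0; 1; 0]; [:: 1; 0; 0; 1; 0; 2; 0];
      [:: -1; 0; 0; 1; 1; 0; 0]; [:: -1; 0; 1; 2; 3; 1; 0]];
  [:: [:: 1; 0; 1; 0; 0; 2; 2]];
  [:: [:: -1; 0; 0; 0; 0; 0; 2]; [:: -1; 1; 0; 0; 0; 0; 3]; [:: 1; 1; 0; 1; 0; 0; 2];
      [:: 1; 1; 0; 1; 1; 0; 3]; [:: 1; 1; 0; 1; 3; 1; 3]];
  [:: [:: 1; 0; 0; 1; 0; 0; 0]; [:: 1; 0; 0; 1; 0; 1; 0]; [:: 1; 0; 0; 1; 0; 2; 0];
      [:: -1; 0; 1; 3; 1; 0; 0]];
  [:: [:: 1; 0; 0; 0; 0; 0; 1]; [:: 1; 0; 1; 0; 0; 2; 2]; [:: 1; 0; 1; 2; 0; 1; 1]];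
  [:: [:: -1; 0; 0; 0; 0; 0; 1]; [:: -1; 0; 0; 1; 0; 0; 0]; [:: -1; 0; 0; 1; 0; 1; 0];
      [:: 1; 0; 0; 1; 0; 1; 1]; [:: 1; 0; 1; 0; 1; 2; 2]; [:: -1; 0; 1; 2; 1; 0; 2];
      [:: -1; 0; 1; 3; 0; 1; 2]; [:: 1; 0; 1; 3; 0; 2; 1]; [:: 1; 1; 0; 1; 0; 0; 1];
      [:: -1; 1; 0; 1; 0; 0; 2]; [:: 1; 1; 0; 1; 1; 1; 2]; [:: 1; 1; 0; 1; 3; 2; 2]];
  [:: [:: -1; 0; 0; 0; 0; 0; 2]; [:: -1; 0; 0; 1; 0; 0; 0]; [:: -1; 0; 0; 1; 0; 1; 0];
      [:: 1; 0; 1; 0; 1; 2; 2]; [:: -1; 0; 1; 2; 1; 0; 2]; [:: -1; 0; 1; 3; 0; 1; 2]];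
  [:: [:: 1; 0; 0; 0; 0; 0; 1]; [:: 3; 0; 0; 1; 0; 0; 0]; [:: 2; 0; 0; 1; 0; 1; 0];
      [:: 1; 0; 0; 1; 0; 1; 1]; [:: 1; 0; 0; 1; 1; 0; 0]; [:: -1; 0; 1; 0; 0; 2; 2];
      [:: -2; 0; 1; 0; 1; 2; 2]; [:: 1; 0; 1; 2; 1; 0; 2]; [:: 1; 0; 1; 3; 0; 1; 2];
      [:: -1; 0; 2; 2; 1; 3; 3]; [:: -1; 1; 0; 0; 0; 0; 3]; [:: -1; 1; 0; 1; 0; 0; 1];
      [:: 1; 1; 0; 1; 0; 0; 2]; [:: 1; 1; 0; 1; 1; 0; 3]; [:: 1; 1; 0; 1; 3; 1; 0];
      [:: -1; 1; 1; 0; 0; 0; 0]];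
  [:: [:: 1; 0; 0; 0; 0; 0; 1]; [:: 1; 0; 0; 1; 0; 0; 0]; [:: 1; 0; 0; 1; 0; 1; 0];
      [:: 2; 0; 0; 1; 0; 1; 1]; [:: -1; 0; 0; 1; 0; 2; 0]; [:: 1; 0; 0; 1; 1; 0; 0];
      [:: -2; 0; 1; 0; 1; 2; 2]; [:: 1; 0; 1; 2; 0; 1; 1]; [:: 1; 0; 1; 2; 1; 0; 2];
      [:: 1; 0; 1; 2; 3; 1; 0]; [:: -1; 0; 1; 2; 3; 2; 3]; [:: 1; 0; 1; 3; 0; 1; 2];
      [:: 1; 0; 1; 3; 3; 2; 3]; [:: 1; 0; 2; 1; 0; 2; 1]; [:: -1; 0; 2; 2; 1; 3; 3];
      [:: -1; 1; 0; 0; 0; 0; 3]; [:: 1; 1; 0; 1; 0; 0; 2]; [:: 1; 1; 0; 1; 1; 0; 3];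
      [:: 1; 1; 0; 1; 2; 3; 1]];
  [:: [:: 1; 0; 0; 0; 0; 0; 1]; [:: 2; 0; 0; 1; 0; 0; 0]; [:: 1; 0; 0; 1; 0; 1; 0];
      [:: 2; 0; 0; 1; 0; 1; 1]; [:: -1; 0; 0; 1; 0; 2; 0]; [:: 1; 0; 0; 1; 1; 0; 0];
      [:: -1; 0; 1; 0; 0; 2; 2]; [:: -2; 0; 1; 0; 1; 2; 2]; [:: 1; 0; 1; 2; 1; 0; 2];
      [:: 1; 0; 1; 3; 0; 1; 2]; [:: 1; 0; 1; 3; 1; 0; 0]; [:: -1; 0; 2; 2; 1; 3; 0];
      [:: -1; 0; 2; 2; 1; 3; 3]; [:: -1; 0; 2; 3; 0; 3; 3]; [:: -1; 1; 0; 0; 0; 0; 3];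
      [:: -1; 1; 0; 1; 0; 0; 1]; [:: 1; 1; 0; 1; 0; 0; 2]; [:: 1; 1; 0; 1; 1; 0; 3];
      [:: 1; 1; 0; 1; 2; 3; 2]];
  [:: [:: 1; 0; 0; 0; 0; 0; 1]; [:: 1; 0; 0; 1; 0; 0; 0]; [:: 1; 0; 0; 1; 0; 1; 0];
      [:: 1; 0; 0; 1; 0; 1; 1]; [:: -1; 0; 0; 1; 0; 2; 0]; [:: 1; 0; 0; 1; 1; 0; 0];
      [:: -2; 0; 1; 0; 1; 2; 2]; [:: 1; 0; 1; 2; 0; 1; 1]; [:: 1; 0; 1; 2; 1; 0; 2];
      [:: 1; 0; 1; 2; 3; 1; 0]; [:: -1; 0; 1; 2; 3; 2; 3]; [:: 1; 0; 1; 3; 0; 1; 2];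
      [:: 1; 0; 1; 3; 3; 2; 3]; [:: -1; 0; 2; 2; 1; 3; 3]; [:: -1; 1; 0; 0; 0; 0; 3];
      [:: 1; 1; 0; 1; 0; 0; 2]; [:: 1; 1; 0; 1; 1; 0; 3]; [:: -1; 1; 0; 1; 2; 0; 3]];
  [:: [:: 3; 0; 0; 1; 0; 1; 1]; [:: -1; 0; 0; 1; 0; 2; 0]; [:: 1; 0; 0; 1; 1; 0; 0];
      [:: -1; 0; 1; 0; 1; 2; 2]; [:: 1; 0; 1; 2; 0; 1; 1]; [:: 1; 0; 1; 2; 3; 1; 0];
      [:: -1; 0; 1; 2; 3; 2; 3]; [:: 1; 0; 1; 3; 0; 2; 1]; [:: 1; 0; 1; 3; 3; 2; 3];
      [:: 1; 0; 2; 1; 0; 2; 1]; [:: -1; 0; 2; 2; 1; 3; 3]; [:: 1; 1; 0; 1; 0; 0; 1];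
      [:: 1; 1; 0; 1; 2; 3; 1]; [:: -1; 1; 0; 1; 3; 1; 3]; [:: 1; 1; 1; 0; 1; 1; 0]];
  [:: [:: 1; 0; 0; 0; 0; 0; 1]; [:: -1; 0; 0; 0; 0; 0; 3]; [:: -1; 0; 0; 1; 0; 0; 0];
      [:: 1; 0; 0; 1; 0; 1; 1]; [:: 1; 0; 1; 2; 0; 1; 1]; [:: -1; 0; 1; 2; 3; 2; 3];
      [:: 1; 0; 1; 3; 3; 2; 3]; [:: 1; 0; 2; 1; 0; 2; 1]; [:: -1; 1; 0; 2; 2; 1; 1]];
  [:: [:: 1; 0; 0; 0; 0; 0; 1]; [:: 1; 0; 0; 1; 0; 0; 0]; [:: 1; 0; 0; 1; 0; 1; 0];
      [:: 1; 0; 0; 1; 0; 1; 1]; [:: -1; 0; 1; 0; 1; 2; 2]; [:: 1; 0; 1; 2; 1; 0; 2];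
      [:: 1; 0; 1; 3; 0; 1; 2]; [:: -1; 0; 2; 2; 1; 3; 3]; [:: -1; 1; 0; 0; 0; 0; 3];
      [:: -1; 1; 0; 1; 0; 0; 1]; [:: 1; 1; 0; 1; 0; 0; 2]; [:: 1; 1; 0; 1; 1; 0; 3];
      [:: -1; 1; 0; 1; 2; 1; 2]];
  [:: [:: 1; 0; 0; 0; 0; 0; 1]; [:: -1; 0; 0; 1; 0; 0; 0]; [:: -1; 0; 0; 1; 0; 1; 0];
      [:: -1; 0; 0; 1; 0; 2; 0]; [:: 1; 0; 0; 1; 1; 0; 0]; [:: 1; 0; 1; 0; 0; 2; 2];
      [:: 1; 0; 1; 2; 0; 1; 1]; [:: 1; 0; 1; 2; 3; 1; 0]; [:: -1; 0; 1; 2; 3; 2; 3];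
      [:: 1; 0; 1; 3; 3; 2; 3]];
  [:: [:: 1; 0; 0; 0; 0; 0; 1]; [:: 2; 0; 0; 1; 0; 0; 0]; [:: 1; 0; 0; 1; 0; 1; 0];
      [:: 2; 0; 0; 1; 0; 1; 1]; [:: -1; 0; 0; 1; 0; 2; 0]; [:: 1; 0; 0; 1; 1; 0; 0];
      [:: -1; 0; 1; 0; 0; 2; 2]; [:: -2; 0; 1; 0; 1; 2; 2]; [:: 1; 0; 1; 2; 1; 0; 2];
      [:: 1; 0; 1; 3; 0; 1; 2]; [:: 1; 0; 1; 3; 1; 0; 0]; [:: -1; 0; 2; 2; 1; 3; 0];
      [:: -1; 0; 2; 2; 1; 3; 3]; [:: -1; 0; 2; 3; 0; 3; 3]; [:: -1; 1; 0; 0; 0; 0; 3];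
      [:: -1; 1; 0; 1; 0; 0; 1]; [:: 1; 1; 0; 1; 0; 0; 2]; [:: 1; 1; 0; 1; 1; 0; 3];
      [:: 1; 1; 0; 1; 2; 3; 2]; [:: 1; 1; 1; 0; 1; 2; 0]];
  [:: [:: 1; 0; 0; 0; 0; 0; 1]; [:: 1; 0; 0; 0; 0; 0; 2]; [:: 1; 0; 0; 1; 0; 0; 0];
      [:: 1; 0; 0; 1; 0; 1; 0]; [:: 2; 0; 0; 1; 0; 1; 1]; [:: -1; 0; 0; 1; 0; 2; 0];
      [:: 1; 0; 0; 1; 1; 0; 0]; [:: -2; 0; 1; 0; 1; 2; 2]; [:: 1; 0; 1; 2; 0; 1; 1];
      [:: 1; 0; 1; 2; 1; 0; 2]; [:: 1; 0; 1; 2; 3; 1; 0]; [:: -1; 0; 1; 2; 3; 2; 3];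
      [:: 1; 0; 1; 3; 0; 1; 2]; [:: 1; 0; 1; 3; 3; 2; 3]; [:: 1; 0; 2; 1; 0; 2; 1];
      [:: -1; 0; 2; 2; 1; 3; 3]; [:: -1; 1; 0; 0; 0; 0; 3]; [:: 1; 1; 0; 1; 1; 0; 3];
      [:: -1; 1; 0; 1; 2; 2; 1]];
  [:: [:: -1; 0; 0; 1; 0; 0; 0]; [:: -1; 0; 0; 1; 0; 1; 0]; [:: 1; 0; 1; 0; 0; 2; 2];
      [:: 1; 0; 1; 0; 1; 2; 2]];
  [:: [:: -1; 0; 0; 1; 0; 1; 0]; [:: 1; 0; 0; 1; 0; 1; 1]; [:: -1; 0; 0; 1; 0; 2; 0];
      [:: 1; 0; 0; 1; 1; 0; 0]; [:: 1; 0; 1; 3; 1; 0; 0]; [:: -1; 0; 2; 2; 1; 3; 0]];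
  [:: [:: 1; 0; 0; 0; 0; 0; 1]; [:: 1; 0; 0; 0; 0; 0; 3]; [:: 2; 0; 0; 1; 0; 0; 0];
      [:: 1; 0; 0; 1; 0; 1; 0]; [:: 1; 0; 0; 1; 0; 1; 1]; [:: -1; 0; 0; 1; 0; 2; 0];
      [:: 2; 0; 0; 1; 1; 0; 0]; [:: -2; 0; 1; 0; 1; 2; 2]; [:: 1; 0; 1; 2; 0; 1; 1];
      [:: 1; 0; 1; 2; 1; 0; 2]; [:: 2; 0; 1; 2; 3; 1; 0]; [:: -1; 0; 1; 2; 3; 2; 3];
      [:: 1; 0; 1; 3; 0; 1; 2]; [:: -1; 0; 1; 3; 1; 0; 0]; [:: 1; 0; 1; 3; 3; 2; 3];
      [:: -1; 0; 2; 2; 1; 3; 3]; [:: -1; 1; 0; 0; 0; 0; 3]; [:: 1; 1; 0; 1; 0; 0; 2];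
      [:: 1; 1; 0; 1; 1; 0; 3]; [:: -1; 1; 0; 1; 2; 0; 3]; [:: 1; 1; 1; 0; 1; 3; 0]];
  [:: [:: 1; 0; 0; 0; 0; 0; 1]; [:: -1; 0; 0; 1; 0; 0; 0]; [:: -1; 0; 0; 1; 0; 1; 0];
      [:: 1; 0; 0; 1; 0; 1; 1]; [:: -1; 0; 0; 1; 0; 2; 0]; [:: 1; 0; 0; 1; 1; 0; 0];
      [:: 1; 0; 1; 0; 0; 2; 2]; [:: 1; 0; 1; 2; 0; 1; 1]; [:: 1; 0; 1; 2; 3; 1; 0];
      [:: -1; 0; 1; 2; 3; 2; 3]; [:: 1; 0; 1; 3; 3; 2; 3]; [:: 1; 0; 2; 1; 0; 2; 1]];
  [:: [:: -1; 0; 0; 1; 0; 1; 0]; [:: 1; 0; 0; 1; 0; 1; 1]; [:: -1; 0; 0; 1; 0; 2; 0];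
      [:: 1; 0; 0; 1; 1; 0; 0]; [:: 1; 0; 1; 3; 1; 0; 0]; [:: -1; 0; 2; 2; 1; 3; 0];
      [:: -1; 0; 2; 3; 0; 3; 3]];
  [:: [:: -1; 0; 0; 0; 0; 0; 2]; [:: 1; 0; 0; 0; 0; 0; 3]; [:: -1; 0; 0; 1; 0; 1; 0];
      [:: 1; 0; 0; 1; 0; 1; 1]; [:: 1; 0; 0; 1; 1; 0; 0]; [:: 1; 0; 1; 0; 1; 2; 2];
      [:: -1; 0; 1; 2; 1; 0; 2]; [:: 1; 0; 1; 2; 3; 1; 0]; [:: -1; 0; 1; 3; 0; 1; 2];
      [:: 1; 0; 1; 3; 0; 2; 1]; [:: -1; 0; 2; 3; 1; 2; 1]];
  [:: [:: -1; 0; 0; 0; 0; 0; 1]; [:: -1; 0; 0; 1; 0; 0; 0]; [:: -1; 0; 0; 1; 0; 1; 0];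
      [:: -1; 0; 0; 1; 0; 1; 1]; [:: 1; 0; 0; 1; 0; 2; 0]; [:: 1; 0; 1; 0; 0; 2; 2];
      [:: 2; 0; 1; 0; 1; 2; 2]; [:: -1; 0; 1; 2; 1; 0; 2]; [:: -1; 0; 1; 3; 0; 1; 2];
      [:: -1; 0; 1; 3; 1; 0; 0]; [:: 1; 0; 2; 2; 1; 3; 3]; [:: 1; 1; 0; 0; 0; 0; 3];
      [:: 1; 1; 0; 1; 0; 0; 1]; [:: -1; 1; 0; 1; 0; 0; 2]; [:: -1; 1; 0; 1; 1; 0; 3];
      [:: 1; 1; 0; 1; 1; 3; 0]];
  [:: [:: 1; 0; 0; 1; 0; 1; 1]; [:: 1; 0; 0; 1; 1; 0; 0]; [:: -1; 0; 3; 0; 0; 1; 0]];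
  [:: [:: -1; 0; 0; 0; 0; 0; 1]; [:: -1; 0; 0; 1; 0; 0; 0]; [:: -1; 0; 0; 1; 0; 1; 0];
      [:: 1; 0; 0; 1; 0; 1; 1]; [:: 1; 0; 1; 0; 1; 2; 2]; [:: -1; 0; 1; 2; 1; 0; 2];
      [:: -1; 0; 1; 3; 0; 1; 2]; [:: 1; 0; 1; 3; 0; 2; 1]; [:: 1; 1; 0; 1; 0; 0; 1];
      [:: -1; 1; 0; 1; 0; 0; 2]; [:: -1; 1; 0; 1; 3; 0; 2]];
  [:: [:: 1; 0; 0; 1; 0; 1; 1]; [:: 1; 0; 0; 1; 0; 2; 0]; [:: 1; 0; 1; 0; 0; 2; 2];
      [:: 1; 0; 1; 0; 1; 2; 2]; [:: -1; 0; 1; 3; 1; 0; 0]; [:: 1; 0; 1; 3; 2; 2; 2];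
      [:: -1; 0; 3; 0; 0; 1; 2]];
  [:: [:: 1; 0; 0; 1; 0; 0; 0]; [:: 1; 0; 0; 1; 1; 0; 0]];
  [:: [:: 1; 0; 0; 0; 0; 0; 1]; [:: -1; 0; 0; 0; 0; 0; 2]; [:: -1; 1; 0; 0; 0; 0; 1];
      [:: -1; 1; 0; 1; 0; 0; 1]; [:: 1; 1; 0; 1; 0; 0; 2]; [:: 1; 1; 0; 1; 1; 0; 1]];
  [:: [:: 1; 0; 0; 1; 0; 2; 0]; [:: 1; 0; 1; 0; 0; 2; 2]; [:: 1; 0; 1; 0; 1; 2; 2];
      [:: -1; 0; 1; 3; 1; 0; 0]; [:: 1; 0; 1; 3; 2; 2; 2]];
  [:: [:: -1; 0; 0; 0; 0; 0; 2]; [:: -2; 0; 0; 1; 0; 0; 0]; [:: -2; 0; 0; 1; 0; 1; 0];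
      [:: -1; 0; 0; 1; 0; 1; 1]; [:: 1; 0; 1; 0; 0; 2; 2]; [:: 2; 0; 1; 0; 1; 2; 2];
      [:: -1; 0; 1; 2; 1; 0; 2]; [:: -1; 0; 1; 3; 0; 1; 2]; [:: 1; 0; 2; 2; 1; 3; 3]];
  [:: [:: -1; 0; 1; 0; 0; 2; 2]; [:: -1; 0; 1; 2; 3; 2; 0]];
  [:: [:: 1; 0; 0; 1; 0; 0; 0]; [:: 1; 0; 0; 1; 0; 1; 0]; [:: 2; 0; 0; 1; 0; 1; 1];
      [:: -1; 0; 1; 0; 0; 2; 2]; [:: -1; 0; 1; 0; 1; 2; 2]; [:: 1; 0; 1; 3; 0; 2; 1];
      [:: -1; 0; 2; 2; 1; 3; 3]; [:: -1; 1; 0; 0; 0; 0; 3]; [:: 1; 1; 0; 1; 1; 0; 3];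
      [:: 1; 1; 0; 1; 1; 1; 1]];
  [:: [:: -1; 0; 0; 0; 0; 0; 1]; [:: -1; 0; 0; 1; 0; 0; 0]; [:: -1; 0; 0; 1; 0; 1; 0];
      [:: 1; 0; 0; 1; 0; 1; 1]; [:: 1; 0; 1; 0; 1; 2; 2]; [:: -1; 0; 1; 2; 1; 0; 2];
      [:: -1; 0; 1; 3; 0; 1; 2]; [:: 1; 0; 1; 3; 0; 2; 1]; [:: 1; 1; 0; 1; 0; 0; 1];
      [:: -1; 1; 0; 1; 0; 0; 2]; [:: 1; 1; 0; 1; 1; 1; 2]];
  [:: [:: -1; 0; 0; 1; 0; 1; 0]; [:: -1; 0; 0; 1; 0; 2; 0]; [:: 1; 0; 0; 1; 1; 0; 0];
      [:: 1; 0; 1; 2; 3; 1; 0]; [:: -1; 0; 1; 2; 3; 2; 3]];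
  [:: [:: 1; 0; 0; 0; 0; 0; 1]; [:: 2; 0; 0; 1; 0; 0; 0]; [:: 2; 0; 0; 1; 0; 1; 0];
      [:: 1; 0; 0; 1; 0; 1; 1]; [:: -1; 0; 1; 0; 0; 2; 2]; [:: -2; 0; 1; 0; 1; 2; 2];
      [:: 1; 0; 1; 2; 1; 0; 2]; [:: 1; 0; 1; 3; 0; 1; 2]; [:: -1; 0; 2; 2; 1; 3; 3];
      [:: -1; 1; 0; 0; 0; 0; 3]; [:: -1; 1; 0; 1; 0; 0; 1]; [:: 1; 1; 0; 1; 0; 0; 2];
      [:: 1; 1; 0; 1; 1; 0; 3]; [:: -1; 1; 0; 1; 3; 3; 0]];
  [:: [:: -1; 0; 0; 0; 0; 0; 3]; [:: -2; 0; 0; 1; 0; 0; 0]; [:: -1; 0; 0; 1; 0; 1; 0];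
      [:: -1; 0; 0; 1; 0; 1; 1]; [:: 1; 0; 0; 1; 0; 2; 0]; [:: -1; 0; 0; 1; 1; 0; 0];
      [:: 1; 0; 1; 0; 0; 2; 2]; [:: 2; 0; 1; 0; 1; 2; 2]; [:: -1; 0; 1; 2; 1; 0; 2];
      [:: -1; 0; 1; 2; 3; 1; 0]; [:: -1; 0; 1; 3; 0; 1; 2]; [:: 1; 0; 2; 2; 1; 3; 3];
      [:: 1; 1; 0; 0; 0; 0; 3]; [:: -1; 1; 0; 1; 0; 0; 2]; [:: -1; 1; 0; 1; 1; 0; 3];
      [:: 1; 1; 0; 1; 1; 2; 1]];
  [:: [:: -1; 0; 0; 0; 0; 0; 1]; [:: 1; 0; 0; 0; 0; 0; 3]; [:: -1; 0; 0; 1; 0; 1; 0];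
      [:: -1; 0; 0; 1; 0; 2; 0]; [:: 1; 0; 0; 1; 1; 0; 0]; [:: 1; 0; 1; 2; 3; 1; 0];
      [:: -1; 0; 1; 2; 3; 3; 2]];
  [:: [:: 1; 0; 0; 0; 0; 0; 1]; [:: -1; 0; 0; 0; 0; 0; 2]; [:: -1; 1; 0; 0; 0; 0; 3];
      [:: -1; 1; 0; 1; 0; 0; 1]; [:: 1; 1; 0; 1; 0; 0; 2]; [:: -1; 1; 0; 1; 3; 3; 3]]].

Definition certificate (t : cell) : seq (seq int) :=
  nth [::] certificate_table (16 * t.1.1 + 4 * t.1.2 + t.2)%N.

Definition decomposition_lc (t : cell) : lincomb cell :=
  relations_lc (certificate t) ++ d1_lc primitive_lc t
    ++ lc_scale (odd_pair t.1.1 t.1.2 t.2) psi_lc.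

Lemma decomposition_lc_coef :
  all (fun t => let L := decomposition_lc t in
               all (fun s => lc_coef L s == lc_coef [:: (1, t)] s) cells) cells.
Proof. by vm_compute. Qed.

Lemma cochain_decomposition c m h g :
  c m h g = lc_eval (at_cell c) (relations_lc (certificate (m, h, g)))
            + (d1 (primitive c) m h g + odd_pair m h g * psi c).
Proof.
have /all_cells/(_ (m, h, g))/all_cells coefE := decomposition_lc_coef.
have -> : c m h g = lc_eval (at_cell c) [:: (1, (m, h, g))].
  by rewrite /= mul1r addr0.
rewrite -(eq_lc_eval _ (fun s => eqP (coefE s))).
by rewrite /decomposition_lc lc_eval_cat (lc_eval_cat _ (d1_lc _ _)) lc_eval_d1_lc
  lc_eval_scale.
Qed.

Lemma cocycle_congr_d1 n c m h g : cocycle2 n c ->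
  cong n (c m h g) (d1 (primitive c) m h g + odd_pair m h g * psi c).
Proof.
move=> c_cocycle; rewrite /cong {1}cochain_decomposition addrK.
exact: relations_lc_dvdz.
Qed.

Lemma odd_pair_cocycle n : cocycle2 n odd_pair.
Proof.
have d2_odd_pair : all (fun s => all (fun t =>
    d2 odd_pair s.1.1 s.1.2 s.2 t.1.1 t.1.2 t.2 == 0) cells) cells.
  by vm_compute.
move=> p n' k m h g; rewrite /cong subr0.
by move/all_cells/(_ (p, n', k))/all_cells/(_ (m, h, g))/eqP: d2_odd_pair => ->.
Qed.

Lemma psi_odd_pair : psi odd_pair = 1.
Proof. by vm_compute. Qed.

Lemma d1_odd_indicator m h g : d1 odd_indicator m h g = 2 * odd_pair m h g.
Proof.
have : all (fun t =>
    d1 odd_indicator t.1.1 t.1.2 t.2 == 2 * odd_pair t.1.1 t.1.2 t.2) cells.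
  by vm_compute.
by move/all_cells/(_ (m, h, g))/eqP.
Qed.

Lemma psi_d1 b : psi (d1 b) = 2 * b (z4 3).
Proof.
have -> : 2 * b (z4 3) = lc_eval b [:: (2, z4 3)] by rewrite /= addr0.
rewrite /psi lc_eval_d1_transpose; apply: eq_lc_eval => x.
have : all (fun x =>
    lc_coef (d1_transpose psi_lc) x == lc_coef [:: (2, z4 3)] x) Z4_elems.
  by vm_compute.
by move/allP/(_ x (mem_Z4_elems x))/eqP.
Qed.

Lemma psi_add c c' : psi (addC2 c c') = psi c + psi c'.
Proof. exact: lc_evalD. Qed.

Lemma d1_add_scale (b b' : C1) k m h g :
  d1 (fun x => b x + k * b' x) m h g = d1 b m h g + k * d1 b' m h g.
Proof. by rewrite /d1; ring. Qed.

Lemma cocycle_coboundary n c k :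
  cocycle2 n c -> (n%:Z %| psi c - 2 * k)%Z -> coboundary2 n c.
Proof.
move=> c_cocycle dvd_psi.
exists (fun x => primitive c x + k * odd_indicator x) => m h g.
rewrite /cong d1_add_scale d1_odd_indicator.
set r := c m h g - (d1 (primitive c) m h g + odd_pair m h g * psi c).
have -> : c m h g - (d1 (primitive c) m h g + k * (2 * odd_pair m h g))
          = r + odd_pair m h g * (psi c - 2 * k) by rewrite /r; ring.
by rewrite rpredD ?dvdz_mull //; apply: cocycle_congr_d1.
Qed.

Lemma coboundary_psi_even n c : ~~ odd n -> coboundary2 n c -> (2 %| psi c)%Z.
Proof.
move=> n_even [b c_congr].
have dvd2n : (2 %| n%:Z)%Z by rewrite dvdzE /= dvdn2.
rewrite -(subrK (psi (d1 b)) (psi c)) rpredD //; last by rewrite psi_d1 dvdz_mulr.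
rewrite /psi -lc_evalB; apply: lc_eval_dvdz => t.
exact: dvdz_trans dvd2n (c_congr t.1.1 t.1.2 t.2).
Qed.

Lemma intr_Z2_eq0 (x : int) : (x%:~R : 'Z_2) = 0 <-> (2 %| x)%Z.
Proof.
have two_eq0 : (2%:~R : 'Z_2) = 0 by apply/eqP.
rewrite {1}(divz_eq x 2) intrD intrM two_eq0 mulr0 add0r.
split=> [mod_eq0 | /dvdz_mod0P -> //]; apply/dvdz_mod0P.
move: mod_eq0 (modz_ge0 x (isT : (2 : int) != 0)) (ltz_pmod x (isT : (0 : int) < 2)).
by case: (x %% 2)%Z => [[|[|r]]|r].
Qed.

Theorem mainTheorem19 (n : nat) :
  (~~ odd n ->
     exists phi : C2 -> 'Z_2,
       (forall c c', cocycle2 n c -> cocycle2 n c' ->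
           phi (addC2 c c') = phi c + phi c')
       /\ (exists c, cocycle2 n c /\ phi c = 1)
       /\ (forall c, cocycle2 n c -> (phi c = 0 <-> coboundary2 n c)))
  /\
  (odd n -> forall c, cocycle2 n c -> coboundary2 n c).
Proof.
split=> [n_even | n_odd c c_cocycle].
  exists (fun c => (psi c)%:~R); split=> [c c' _ _|].
    by rewrite psi_add intrD.
  split=> [|c c_cocycle].
    by exists odd_pair; rewrite psi_odd_pair; split; first exact: odd_pair_cocycle.
  split=> [/intr_Z2_eq0 psi_even | /(coboundary_psi_even n_even)/intr_Z2_eq0 //].
  by apply: (cocycle_coboundary (k := (psi c %/ 2)%Z)); rewrite // mulrC divzK // subrr.
apply: (cocycle_coboundary (k := psi c * ((n.+1)./2)%:Z)) => //.
have half : 2 * ((n.+1)./2)%:Z = n%:Z + 1.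
  have := odd_double_half n.+1; rewrite /= n_odd add0n -muln2 => halfE.
  by rewrite mulrC -[2]/(2%:Z) -PoszM halfE -addn1 PoszD.
rewrite mulrCA half mulrDr mulr1 opprD addrCA subrr addr0 rpredN.
exact/dvdz_mull/dvdzz.
Qed.
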